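(* Let $G$ be a simple directed graph with asymmetric adjacency matrix $A$ having an exact D-IPS with two compressed nodes. Then the singular value decomposition of $A$ has a unique leading left singular vector $v$ and a unique leading right singular vector $w$ with $v,w\ge 0$ (entrywise), and the positive parts of $v$ and $w$ (the sets of indices with positive entries) identify the two compressed nodes.
   Context: A simple directed graph has no self-loops and no multiple edges. Its asymmetric adjacency matrix $A$ has $A_{ij}=1$ if there is a directed edge from $x_i$ to $x_j$ and $A_{ij}=0$ otherwise. A summarization of size $k$ consists of a surjective map $\phi$ from the vertex set onto $k$ compressed nodes $c_1,\dots,c_k$ (the sets $C_I=\phi^{-1}(c_I)$ partition the vertices) together with a simple directed summarized graph on $\{c_1,\dots,c_k\}$ described by compressed relation values $r_{IJ}$ with $r_{II}=0$ and $r_{IJ}r_{JI}=0$. The graph has an exact Directions Influence Preserving Structure (exact D-IPS) with $k$ compressed nodes if there is such a summarization with $\mathrm{sign}(A_{ij})=\mathrm{sign}(r_{IJ})$ for all $i\neq j$, $x_i\in C_I$, $x_j\in C_J$, where $\mathrm{sign}(0)=0$ differs from the sign of any nonzero number. *)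

From mathcomp Require Import all_boot all_order all_algebra.
From mathcomp Require Import reals.
Set Implicit Arguments. Unset Strict Implicit. Unset Printing Implicit Defensive.
Import Order.TTheory GRing.Theory Num.Theory.
Local Open Scope ring_scope.

(* A simple directed graph on vertices x_0..x_{n-1} ('I_n) is an
   irreflexive relation e (e i j = edge from x_i to x_j); multiple edges
   are impossible by construction. *)
Definition simple_digraph (n : nat) (e : rel 'I_n) : Prop := irreflexive e.

Definition adjacency (R : realType) (n : nat) (e : rel 'I_n) : 'M[R]_n :=
  \matrix_(i, j) (e i j)%:R.

(* A summarization of size k: surjective phi onto k compressed nodes, with
   compressed relation values r (a simple directed summarized graph:
   r_II = 0 and r_IJ r_JI = 0). *)
Definition summarization (R : realType) (n k : nat)
    (phi : 'I_n -> 'I_k) (r : 'M[R]_k) : Prop :=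
  (forall I : 'I_k, exists x : 'I_n, phi x = I) /\
  (forall I : 'I_k, r I I = 0) /\
  (forall I J : 'I_k, r I J * r J I = 0).

Definition exact_DIPS_summ (R : realType) (n k : nat) (A : 'M[R]_n)
    (phi : 'I_n -> 'I_k) (r : 'M[R]_k) : Prop :=
  summarization phi r /\
  (forall i j : 'I_n, i != j -> Num.sg (A i j) = Num.sg (r (phi i) (phi j))).

Definition has_exact_DIPS (R : realType) (n k : nat) (A : 'M[R]_n) : Prop :=
  exists (phi : 'I_n -> 'I_k) (r : 'M[R]_k), exact_DIPS_summ A phi r.

Definition singular_triple (R : realType) (n : nat) (A : 'M[R]_n)
    (s : R) (v w : 'cV[R]_n) : Prop :=
  0 <= s /\ v^T *m v = 1%:M /\ w^T *m w = 1%:M /\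
  A *m w = s *: v /\ A^T *m v = s *: w.

Definition top_singular_value (R : realType) (n : nat) (A : 'M[R]_n) (s : R)
    : Prop :=
  (exists v w, singular_triple A s v w) /\
  (forall s' v w, singular_triple A s' v w -> s' <= s).

Definition leading_left_sv (R : realType) (n : nat) (A : 'M[R]_n)
    (v : 'cV[R]_n) : Prop :=
  exists s w, top_singular_value A s /\ singular_triple A s v w.

Definition leading_right_sv (R : realType) (n : nat) (A : 'M[R]_n)
    (w : 'cV[R]_n) : Prop :=
  exists s v, top_singular_value A s /\ singular_triple A s v w.

From mathcomp Require Import all_boot all_order all_algebra.
From mathcomp Require Import reals ring.
Import Order.TTheory GRing.Theory Num.Theory.
Local Open Scope ring_scope.
Set Implicit Arguments. Unset Strict Implicit. Unset Printing Implicit Defensive.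

(* With two compressed nodes and at least one arc x_i -> x_j, the sign
   condition forces r to have a single positive entry r_IJ (I != J), so the
   arcs are exactly the pairs from the class I to the class J.  Hence
   A = a b^T, where a and b are the 0/1 indicators of the vertices having an
   out-arc, resp. an in-arc; these do not depend on the summarization, and
   their supports are the classes I and J of any such summarization.
   For a rank-one matrix a b^T, a singular triple (s, v, w) satisfies
   s v = <b,w> a and s w = <a,v> b, so s = 0 or s = |a| |b|; at the top
   value s = |a| |b| > 0 the unit vectors v and w are multiples of a and b,
   i.e. v = +-a/|a| and w = +-b/|b|. *)

Section DotProduct.
Variables (R : realDomainType) (n : nat).
Implicit Types (u v w : 'cV[R]_n).

Definition dotmx u v : R := \sum_i u i 0 * v i 0.

Lemma mul_trmx_col u v : u^T *m v = (dotmx u v)%:M.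
Proof.
apply/matrixP => i j; rewrite !ord1 !mxE eqxx mulr1n.
by apply: eq_bigr => k _; rewrite mxE.
Qed.

Lemma mul_trmx_col_eq1 u : u^T *m u = 1%:M <-> dotmx u u = 1.
Proof.
rewrite mul_trmx_col; split=> [/matrixP/(_ 0 0)|->] //.
by rewrite !mxE eqxx !mulr1n.
Qed.

Lemma dotmxC u v : dotmx u v = dotmx v u.
Proof. by apply: eq_bigr => i _; rewrite mulrC. Qed.

Lemma dotmxZl c u v : dotmx (c *: u) v = c * dotmx u v.
Proof. by rewrite mulr_sumr; apply: eq_bigr => i _; rewrite mxE mulrA. Qed.

Lemma dotmxZr c u v : dotmx u (c *: v) = c * dotmx u v.
Proof. by rewrite dotmxC dotmxZl dotmxC. Qed.

Lemma dotmx_ge0 u : 0 <= dotmx u u.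
Proof. by apply: sumr_ge0 => i _; rewrite -expr2 sqr_ge0. Qed.

Lemma dotmx_gt0 u : (0 < dotmx u u) = (u != 0).
Proof.
rewrite lt0r dotmx_ge0 andbT; apply/idP/idP; apply: contra_neq.
  by move=> ->; rewrite /dotmx big1 // => i _; rewrite mxE mul0r.
move=> u0; apply/matrixP => i j; rewrite ord1 mxE; apply/eqP; rewrite -sqrf_eq0 expr2.
by apply/eqP/(psumr_eq0P _ u0) => // k _; rewrite -expr2 sqr_ge0.
Qed.

Lemma rank_one_mulmx u v w : u *m v^T *m w = dotmx v w *: u.
Proof. by rewrite -mulmxA mul_trmx_col mul_mx_scalar. Qed.

End DotProduct.

Section UnitVector.
Variables (R : rcfType) (n : nat).
Implicit Types (u v : 'cV[R]_n).

Definition vnorm u : R := Num.sqrt (dotmx u u).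

Definition unitv u : 'cV[R]_n := (vnorm u)^-1 *: u.

Lemma vnorm_ge0 u : 0 <= vnorm u.
Proof. exact: sqrtr_ge0. Qed.

Lemma vnorm_gt0 u : (0 < vnorm u) = (u != 0).
Proof. by rewrite sqrtr_gt0 dotmx_gt0. Qed.

Lemma sqr_vnorm u : vnorm u ^+ 2 = dotmx u u.
Proof. by rewrite sqr_sqrtr ?dotmx_ge0. Qed.

Lemma dotmx_unitvr u : dotmx u (unitv u) = vnorm u.
Proof.
rewrite dotmxZr; have [->|u0] := eqVneq (vnorm u) 0; first by rewrite invr0 mul0r.
by rewrite -sqr_vnorm expr2 mulKf.
Qed.

Lemma dotmx_unitv u : u != 0 -> dotmx (unitv u) (unitv u) = 1.
Proof.
rewrite -vnorm_gt0 => /gt_eqF/negbT u0.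
by rewrite dotmxZl dotmx_unitvr mulVf.
Qed.

Lemma unitv_gt0 u i : u != 0 -> (0 < unitv u i 0) = (0 < u i 0).
Proof. by rewrite -vnorm_gt0 mxE => u0; rewrite pmulr_rgt0 ?invr_gt0. Qed.

Lemma unitv_ge0 u i : (forall j, 0 <= u j 0) -> 0 <= unitv u i 0.
Proof. by move=> u_ge0; rewrite mxE mulr_ge0 ?invr_ge0 ?vnorm_ge0. Qed.

Lemma unit_colinear v u c :
  dotmx v v = 1 -> v = c *: u -> v = unitv u \/ v = - unitv u.
Proof.
move=> v1 vE; move: v1; rewrite vE dotmxZl dotmxZr mulrA -expr2 -sqr_vnorm.
rewrite -exprMn => /eqP; rewrite sqrf_eq1 => /orP cN.
have u0 : vnorm u != 0.
  by apply/eqP => u0; case: cN; rewrite u0 mulr0 eq_sym ?oppr_eq0 oner_eq0.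
rewrite /unitv -scaleNr; case: cN => /eqP cN; [left|right]; congr (_ *: _);
  by apply: (mulIf u0); rewrite ?mulNr mulVf.
Qed.

End UnitVector.

Section SingularTranspose.
Variables (R : realType) (n : nat) (A : 'M[R]_n).

Lemma singular_triple_tr s v w :
  singular_triple A^T s w v <-> singular_triple A s v w.
Proof.
rewrite /singular_triple trmxK.
by split=> [[? [? [? [? ?]]]] | [? [? [? [? ?]]]]].
Qed.

Lemma top_singular_value_tr s :
  top_singular_value A^T s <-> top_singular_value A s.
Proof.
split=> [[[v [w /singular_triple_tr t]] s_max] | [[v [w t]] s_max]].
  split; first by exists w, v.
  by move=> s' v' w' /singular_triple_tr /s_max.
split; first by exists w, v; apply/singular_triple_tr.
by move=> s' v' w' /singular_triple_tr /s_max.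
Qed.

Lemma leading_right_sv_tr w : leading_right_sv A w <-> leading_left_sv A^T w.
Proof.
by split=> -[s [v [/top_singular_value_tr ? /singular_triple_tr ?]]]; exists s, v.
Qed.

End SingularTranspose.

Section RankOne.
Variables (R : realType) (n : nat) (a b : 'cV[R]_n).

Lemma rank_one_tripleP s v w :
  singular_triple (a *m b^T) s v w <->
  [/\ 0 <= s, dotmx v v = 1, dotmx w w = 1,
      dotmx b w *: a = s *: v & dotmx a v *: b = s *: w].
Proof.
rewrite /singular_triple !mul_trmx_col_eq1 rank_one_mulmx.
rewrite trmx_mul trmxK rank_one_mulmx.
by split=> [[? [? [? [? ?]]]] | []].
Qed.

Lemma rank_one_singular_value s v w :
  singular_triple (a *m b^T) s v w -> s = 0 \/ s = vnorm a * vnorm b.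
Proof.
case/rank_one_tripleP => s_ge0 v1 w1 Aw ATv.
set al := dotmx a v in ATv; set be := dotmx b w in Aw.
(* s = <a,v><b,w>, and the squared norms of the two equations give
   s^2 = <b,w>^2 |a|^2 = <a,v>^2 |b|^2; multiplying, s^4 = s^2 |a|^2 |b|^2. *)
have s_albe : s = al * be.
  by have := congr1 (dotmx v) Aw; rewrite !dotmxZr v1 mulr1 dotmxC => <-; rewrite mulrC.
have sq_a : s ^+ 2 = be ^+ 2 * vnorm a ^+ 2.
  have := congr1 (fun u => dotmx u u) Aw.
  by rewrite /= !dotmxZl !dotmxZr v1 sqr_vnorm mulr1 mulrA -!expr2 => <-.
have sq_b : s ^+ 2 = al ^+ 2 * vnorm b ^+ 2.
  have := congr1 (fun u => dotmx u u) ATv.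
  by rewrite /= !dotmxZl !dotmxZr w1 sqr_vnorm mulr1 mulrA -!expr2 => <-.
have s4 : s ^+ 2 * s ^+ 2 = s ^+ 2 * (vnorm a * vnorm b) ^+ 2.
  by rewrite {1}sq_a {1}sq_b s_albe; ring.
have [->|s0] := eqVneq s 0; [by left | right].
move/(mulfI (expf_neq0 2 s0))/eqP: s4.
by rewrite eqrXn2 ?mulr_ge0 ?vnorm_ge0 // => /eqP.
Qed.

Lemma rank_one_singular_value_le s v w :
  singular_triple (a *m b^T) s v w -> s <= vnorm a * vnorm b.
Proof.
by case/rank_one_singular_value => ->; rewrite ?mulr_ge0 ?vnorm_ge0.
Qed.

Hypotheses (a0 : a != 0) (b0 : b != 0).

Lemma rank_one_triple_unitv :
  singular_triple (a *m b^T) (vnorm a * vnorm b) (unitv a) (unitv b).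
Proof.
have a_gt0 : 0 < vnorm a by rewrite vnorm_gt0.
have b_gt0 : 0 < vnorm b by rewrite vnorm_gt0.
apply/rank_one_tripleP; split; rewrite ?mulr_ge0 ?vnorm_ge0 ?dotmx_unitv //.
  by rewrite dotmx_unitvr /unitv scalerA mulrAC mulfV ?gt_eqF ?mul1r.
by rewrite dotmx_unitvr /unitv scalerA -mulrA mulfV ?gt_eqF ?mulr1.
Qed.

Lemma rank_one_top_singular_value :
  top_singular_value (a *m b^T) (vnorm a * vnorm b).
Proof.
split; first by exists (unitv a), (unitv b); exact: rank_one_triple_unitv.
by move=> s v w; apply: rank_one_singular_value_le.
Qed.

Lemma rank_one_top_singular_valueE s :
  top_singular_value (a *m b^T) s -> s = vnorm a * vnorm b.
Proof.
case=> [[v [w /rank_one_singular_value_le s_le]] s_max].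
by apply/le_anti; rewrite s_le (s_max _ _ _ rank_one_triple_unitv).
Qed.

Lemma rank_one_leading_left_unitv : leading_left_sv (a *m b^T) (unitv a).
Proof.
exists (vnorm a * vnorm b), (unitv b).
by split; [exact: rank_one_top_singular_value | exact: rank_one_triple_unitv].
Qed.

Lemma rank_one_leading_left_uniq v :
  leading_left_sv (a *m b^T) v -> v = unitv a \/ v = - unitv a.
Proof.
case=> s [w [/rank_one_top_singular_valueE sE /rank_one_tripleP [_ v1 _ Aw _]]].
have s0 : s != 0 by rewrite sE mulf_neq0 // gt_eqF ?vnorm_gt0.
apply: (unit_colinear (c := s^-1 * dotmx b w)) v1 _.
by rewrite -scalerA Aw scalerA mulVf ?scale1r.
Qed.

End RankOne.

Section RankOneRight.
Variables (R : realType) (n : nat) (a b : 'cV[R]_n).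
Hypotheses (a0 : a != 0) (b0 : b != 0).

Lemma rank_one_leading_right_unitv : leading_right_sv (a *m b^T) (unitv b).
Proof.
by apply/leading_right_sv_tr; rewrite trmx_mul trmxK; exact: rank_one_leading_left_unitv.
Qed.

Lemma rank_one_leading_right_uniq w :
  leading_right_sv (a *m b^T) w -> w = unitv b \/ w = - unitv b.
Proof.
move/leading_right_sv_tr; rewrite trmx_mul trmxK.
exact: rank_one_leading_left_uniq.
Qed.

End RankOneRight.

Lemma ord2_other (I J K : 'I_2) : I != J -> K != I -> K = J.
Proof. by move: I J K; do 3![case=> [[|[|//]] ?]] => // *; apply: val_inj. Qed.

Lemma two_node_arcs (R : numDomainType) (r : 'M[R]_2) (I J : 'I_2) :
  (forall K, r K K = 0) -> (forall K L, r K L * r L K = 0) -> 0 < r I J ->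
  forall K L, (0 < r K L) = (K == I) && (L == J).
Proof.
move=> r_diag r_asym rIJ_gt0.
have nIJ : I != J by apply: contraTneq rIJ_gt0 => ->; rewrite r_diag ltxx.
have rJI : r J I = 0.
  by have /eqP := r_asym I J; rewrite mulf_eq0 gt_eqF //= => /eqP.
have nJI : J != I by rewrite eq_sym.
move=> K L.
have [->|/(ord2_other nIJ)->] := eqVneq K I;
  have [->|/(ord2_other nJI)->] := eqVneq L J;
  by rewrite ?eqxx ?r_diag ?rJI ?ltxx ?(negbTE nIJ) ?(negbTE nJI).
Qed.

Section CompleteBipartite.
Variables (T : finType) (e : rel T) (P Q : pred T).
Hypothesis arcsE : forall i j, e i j = P i && Q j.

Lemma complete_bipartite_out : (exists j, Q j) -> forall i, [exists j, e i j] = P i.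
Proof.
move=> [j0 Qj0] i; apply/existsP/idP => [[j]|Pi]; first by rewrite arcsE => /andP[].
by exists j0; rewrite arcsE Pi.
Qed.

Lemma complete_bipartite_in : (exists i, P i) -> forall j, [exists i, e i j] = Q j.
Proof.
move=> [i0 Pi0] j; apply/existsP/idP => [[i]|Qj]; first by rewrite arcsE => /andP[].
by exists i0; rewrite arcsE Qj andbT.
Qed.

End CompleteBipartite.

Definition indicator_col (R : numDomainType) (n : nat) (P : pred 'I_n)
  : 'cV[R]_n := \col_i (P i)%:R.

Lemma indicator_col_gt0 (R : numDomainType) n (P : pred 'I_n) i :
  (0 < indicator_col R P i 0) = P i.
Proof. by rewrite mxE ltr0n lt0b. Qed.

Lemma indicator_col_ge0 (R : numDomainType) n (P : pred 'I_n) i :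
  0 <= indicator_col R P i 0.
Proof. by rewrite mxE ler0n. Qed.

Lemma indicator_col_neq0 (R : numDomainType) n (P : pred 'I_n) x :
  P x -> indicator_col R P != 0.
Proof.
by move=> Px; apply/eqP => /matrixP/(_ x 0)/eqP; rewrite !mxE Px oner_eq0.
Qed.

Lemma adjacency_complete_bipartite (R : realType) n (e : rel 'I_n) (P Q : pred 'I_n) :
  (forall i j, e i j = P i && Q j) ->
  adjacency R e = indicator_col R P *m (indicator_col R Q)^T.
Proof.
move=> arcsE; apply/matrixP => i j.
by rewrite !mxE big_ord1 !mxE arcsE -mulnb natrM.
Qed.

Section TwoNodeDIPS.
Variables (R : realType) (n : nat) (e : rel 'I_n).
Hypotheses (e_irr : simple_digraph e) (e_arc : exists i j, e i j).
Variables (phi : 'I_n -> 'I_2) (r : 'M[R]_2).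
Hypothesis dips : exact_DIPS_summ (adjacency R e) phi r.

Lemma dips_arcE i j : i != j -> e i j = (0 < r (phi i) (phi j)).
Proof.
case: dips => _ sgE ij; have := congr1 (fun x => 0 < x) (sgE i j ij).
by rewrite /= !sgr_gt0 mxE ltr0n lt0b.
Qed.

Lemma dips2_arcs :
  exists I J : 'I_2, I != J /\ forall i j, e i j = (phi i == I) && (phi j == J).
Proof.
have [[_ [r_diag r_asym]] _] := dips.
have [i0 [j0 e_ij0]] := e_arc.
have ij0 : i0 != j0 by apply: contraTneq e_ij0 => ->; rewrite e_irr.
have r_gt0 : 0 < r (phi i0) (phi j0) by rewrite -dips_arcE.
have arcs := two_node_arcs r_diag r_asym r_gt0.
exists (phi i0), (phi j0); split.
  by apply: contraTneq r_gt0 => ->; rewrite r_diag ltxx.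
move=> i j; have [<-|ij] := eqVneq i j; last by rewrite dips_arcE.
by rewrite e_irr -arcs r_diag ltxx.
Qed.

Lemma dips2_structure : exists I J : 'I_2,
  [/\ I != J, forall i j, e i j = (phi i == I) && (phi j == J),
      forall x, [exists j, e x j] = (phi x == I) &
      forall x, [exists i, e i x] = (phi x == J)].
Proof.
have [[phi_surj _] _] := dips.
have [I [J [nIJ arcs]]] := dips2_arcs.
have fiber K : exists x, phi x == K by have [x <-] := phi_surj K; exists x.
exists I, J; split => //.
  exact: (complete_bipartite_out (P := fun x => phi x == I) arcs (fiber J)).
exact: (complete_bipartite_in (Q := fun x => phi x == J) arcs (fiber I)).
Qed.

End TwoNodeDIPS.

Theorem theorem5 (R : realType) (n : nat) (e : rel 'I_n)
  (He : simple_digraph e)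
  (Hedge : exists i j : 'I_n, e i j)
  (HD : has_exact_DIPS 2 (adjacency R e)) :
  exists v w : 'cV[R]_n,
    leading_left_sv (adjacency R e) v /\
        leading_right_sv (adjacency R e) w /\
        ((forall i, 0 <= v i 0) /\ (forall i, 0 <= w i 0)) /\
        (forall u, leading_left_sv (adjacency R e) u -> u = v \/ u = - v) /\
        (forall u, leading_right_sv (adjacency R e) u -> u = w \/ u = - w) /\
        (forall (phi : 'I_n -> 'I_2) (r : 'M[R]_2),
           exact_DIPS_summ (adjacency R e) phi r ->
           exists I J : 'I_2, I != J /\
             (forall x, (0 < v x 0) = (phi x == I)) /\
             (forall x, (0 < w x 0) = (phi x == J))).
Proof.
pose a := indicator_col R [pred i | [exists j, e i j]].
pose b := indicator_col R [pred j | [exists i, e i j]].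
have Aab : adjacency R e = a *m b^T.
  have [phi0 [r0 dips0]] := HD.
  have [I [J [_ arcs outE inE]]] := dips2_structure He Hedge dips0.
  by apply: adjacency_complete_bipartite => i j /=; rewrite arcs outE inE.
have [i0 [j0 e_ij0]] := Hedge.
have a0 : a != 0.
  by apply: (indicator_col_neq0 _ (x := i0)); apply/existsP; exists j0.
have b0 : b != 0.
  by apply: (indicator_col_neq0 _ (x := j0)); apply/existsP; exists i0.
exists (unitv a), (unitv b); rewrite Aab.
split; first exact: rank_one_leading_left_unitv.
split; first exact: rank_one_leading_right_unitv.
split; first by split=> i; apply: unitv_ge0 => j; apply: indicator_col_ge0.
split; first exact: rank_one_leading_left_uniq.
split; first exact: rank_one_leading_right_uniq.
move=> phi r; rewrite -Aab => /(dips2_structure He Hedge) [I [J [nIJ _ outE inE]]].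
by exists I, J; split=> //; split=> x; rewrite unitv_gt0 // indicator_col_gt0 /=.
Qed.
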